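(* Let $m\geq1$, let $p_{1j},p_{2j}\in\mathbb{R}$, $w_{j}>0$, $d_{j}>0$, $h_{j}\in\mathbb{R}$ for $j=1,\ldots,m$, and let $f_{1}\leq g_{1}$, $f_{2}\leq g_{2}$, $a\leq b$ be reals. Consider the problem of minimizing over $(x_{1},x_{2})^{T}\in\mathbb{R}^{2}$ $$\max_{1\leq j\leq m}\big(w_{j}(|x_{1}-p_{1j}|+|x_{2}-p_{2j}|)+h_{j}\big)$$ subject to $|x_{1}-p_{1j}|+|x_{2}-p_{2j}|\leq d_{j}$ ($j=1,\ldots,m$), $f_{1}-x_{2}\leq x_{1}\leq g_{1}-x_{2}$, $f_{2}+x_{1}\leq x_{2}\leq g_{2}+x_{1}$, and $a\leq x_{1}\leq b$. Let $o_{1j}=p_{1j}+p_{2j}$ and $o_{2j}=p_{2j}-p_{1j}$ for $j=1,\ldots,m$, and let $b_{11}^{\ast}=b_{22}^{\ast}=0$, $b_{12}^{\ast}=2a$, $b_{21}^{\ast}=-2b$. Suppose that $$b_{ik}^{\ast}+\max_{1\leq l\leq m}\max\{o_{kl}-d_{l},f_{k}\}\leq\min_{1\leq j\leq m}\min\{o_{ij}+d_{j},g_{i}\},\qquad i,k=1,2.$$ Then the minimum value of the problem is $$\theta=\max_{1\leq j,l\leq m}\max\Bigg\{\frac{w_{l}h_{j}}{w_{j}+w_{l}}+\frac{w_{j}h_{l}}{w_{j}+w_{l}}+\frac{w_{j}w_{l}}{w_{j}+w_{l}}\max_{1\leq i,k\leq2}(b_{ik}^{\ast}-o_{ij}+o_{kl}),$$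 $$h_{j}+w_{j}\max_{1\leq i,k\leq2}\big(b_{ik}^{\ast}-o_{ij}+\max\{o_{kl}-d_{l},f_{k}\}\big),\ h_{l}+w_{l}\max_{1\leq i,k\leq2}\big(b_{ik}^{\ast}-\min\{d_{j}+o_{ij},g_{i}\}+o_{kl}\big)\Bigg\},$$ and all solution vectors $\bm{x}=(x_{1},x_{2})^{T}$ have entries $x_{1}=(y_{1}-y_{2})/2$, $x_{2}=(y_{1}+y_{2})/2$, where $y_{i}=\max\{b_{i1}^{\ast}+u_{1},b_{i2}^{\ast}+u_{2}\}$ for $i=1,2$ and the parameter vector $\bm{u}=(u_{1},u_{2})^{T}$ satisfies, for $k=1,2$, $$\max_{1\leq j\leq m}\max\left\{\frac{h_{j}-\theta}{w_{j}}+o_{kj},\ -d_{j}+o_{kj},\ f_{k}\right\}\leq u_{k}\leq\min_{1\leq i\leq2}\min_{1\leq j\leq m}\left(\min\left\{\frac{\theta-h_{j}}{w_{j}}+o_{ij},\ d_{j}+o_{ij},\ g_{i}\right\}-b_{ik}^{\ast}\right).$$ *)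

From mathcomp Require Import all_boot all_order all_algebra.
Set Implicit Arguments. Unset Strict Implicit. Unset Printing Implicit Defensive.
Import Order.TTheory GRing.Theory Num.Theory.
Local Open Scope ring_scope.

Section Defs.
Variable R : realFieldType.

(* maximum / minimum of F 0, ..., F (m-1)  (meaningful for m >= 1;
   indices j = 1..m of the paper are shifted to 0..m-1) *)
Definition fmax (m : nat) (F : nat -> R) : R :=
  foldr Num.max (F 0%N) [seq F j | j <- iota 0 m].
Definition fmin (m : nat) (F : nat -> R) : R :=
  foldr Num.min (F 0%N) [seq F j | j <- iota 0 m].

Definition max12 (F : nat -> nat -> R) : R :=
  Num.max (Num.max (F 1%N 1%N) (F 1%N 2%N)) (Num.max (F 2%N 1%N) (F 2%N 2%N)).
Definition min12 (F : nat -> R) : R := Num.min (F 1%N) (F 2%N).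

Definition sel2 (z1 z2 : R) (i : nat) : R := if i == 1%N then z1 else z2.

Definition bstar (a b : R) (i k : nat) : R :=
  match i, k with
  | 1%N, 2%N => 2 * a
  | 2%N, 1%N => - (2 * b)
  | _, _ => 0
  end.

Definition ocoord (p1 p2 : nat -> R) (k j : nat) : R :=
  if k == 1%N then p1 j + p2 j else p2 j - p1 j.

Definition rdist (p1 p2 : nat -> R) (j : nat) (x1 x2 : R) : R :=
  `|x1 - p1 j| + `|x2 - p2 j|.

Definition objective (m : nat) (p1 p2 w h : nat -> R) (x1 x2 : R) : R :=
  fmax m (fun j => w j * rdist p1 p2 j x1 x2 + h j).

Definition feasible (m : nat) (p1 p2 d : nat -> R) (f1 g1 f2 g2 a b : R)
  (x1 x2 : R) : Prop :=
  [/\ (forall j, (j < m)%N -> rdist p1 p2 j x1 x2 <= d j),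
      f1 - x2 <= x1 <= g1 - x2,
      f2 + x1 <= x2 <= g2 + x1 &
      a <= x1 <= b].

Definition theta (m : nat) (p1 p2 w d h : nat -> R) (f1 g1 f2 g2 a b : R) : R :=
  let o := ocoord p1 p2 in
  let f := sel2 f1 f2 in
  let g := sel2 g1 g2 in
  let bs := bstar a b in
  fmax m (fun j => fmax m (fun l =>
    Num.max
      (Num.max
        (w l * h j / (w j + w l) + w j * h l / (w j + w l)
         + w j * w l / (w j + w l) * max12 (fun i k => bs i k - o i j + o k l))
        (h j + w j * max12 (fun i k => bs i k - o i j + Num.max (o k l - d l) (f k))))
      (h l + w l * max12 (fun i k => bs i k - Num.min (d j + o i j) (g i) + o k l)))).

Definition yvec (a b u1 u2 : R) (i : nat) : R :=
  Num.max (bstar a b i 1%N + u1) (bstar a b i 2%N + u2).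

End Defs.

(* In the rotated coordinates y1 = x1 + x2, y2 = x2 - x1 the rectilinear
   distance becomes the Chebyshev distance, so for a level t the feasible points
   with objective at most t are exactly the y lying in a box
   [ylow t, yupp t] (one pair of bounds per point j) and satisfying
   2a <= y1 - y2 <= 2b.  In max-plus terms the last condition is y >= A y, whose
   solutions are y = B* u with B* = I (+) A the Kleene star, i.e. y = yvec u;
   the box then becomes an interval condition on u, solvable iff
   ylow_k(t, l) + b*_ik <= yupp_i(t, j) for all i, k, j, l.  Each of these
   inequalities compares a nonincreasing with a nondecreasing piecewise-linear
   function of t, and holds exactly beyond three critical values (the terms of
   theta), its t-independent part being the hypothesis on b*.  Hence theta is
   the least level whose sublevel set is nonempty. *)

From mathcomp Require Import all_boot all_order all_algebra.
From mathcomp Require Import ring lra.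
Set Implicit Arguments. Unset Strict Implicit. Unset Printing Implicit Defensive.
Import Order.TTheory GRing.Theory Num.Theory.
Local Open Scope ring_scope.

Local Notation idx2 := [:: 1%N; 2%N].

Ltac bool_lra :=
  apply/idP/idP => ?;
  repeat match goal with H : is_true (_ && _) |- _ => case/andP: H end;
  repeat (apply/andP; split); lra.

Lemma foldr_max_le d (T : orderType d) (x0 c : T) (s : seq T) :
  (foldr Order.max x0 s <= c)%O = (x0 <= c)%O && all (fun x => x <= c)%O s.
Proof. by elim: s => [|x s IH] /=; rewrite ?andbT // ge_max IH andbCA. Qed.

Lemma foldr_min_ge d (T : orderType d) (x0 c : T) (s : seq T) :
  (c <= foldr Order.min x0 s)%O = (c <= x0)%O && all (fun x => c <= x)%O s.
Proof. by elim: s => [|x s IH] /=; rewrite ?andbT // le_min IH andbCA. Qed.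

Lemma fmax_le {R : realFieldType} {m : nat} {F : nat -> R} {c : R} :
  (0 < m)%N -> fmax m F <= c <-> (forall j, (j < m)%N -> F j <= c).
Proof.
move=> m_gt0; rewrite /fmax foldr_max_le all_map; split.
  by move=> /andP[_ /allP le_c] j jm; apply: le_c; rewrite mem_iota.
by move=> le_c; rewrite le_c //; apply/allP => j; rewrite mem_iota => /le_c.
Qed.

Lemma fmin_ge {R : realFieldType} {m : nat} {F : nat -> R} {c : R} :
  (0 < m)%N -> c <= fmin m F <-> (forall j, (j < m)%N -> c <= F j).
Proof.
move=> m_gt0; rewrite /fmin foldr_min_ge all_map; split.
  by move=> /andP[_ /allP ge_c] j jm; apply: ge_c; rewrite mem_iota.
by move=> ge_c; rewrite ge_c //; apply/allP => j; rewrite mem_iota => /ge_c.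
Qed.

Lemma fmax_ge (R : realFieldType) (m : nat) (F : nat -> R) j :
  (j < m)%N -> F j <= fmax m F.
Proof. by move=> jm; apply: (fmax_le (leq_ltn_trans (leq0n j) jm)).1. Qed.

Lemma fmin_le (R : realFieldType) (m : nat) (F : nat -> R) j :
  (j < m)%N -> fmin m F <= F j.
Proof. by move=> jm; apply: (fmin_ge (leq_ltn_trans (leq0n j) jm)).1. Qed.

Lemma max12_le (R : realFieldType) (F : nat -> nat -> R) c :
  max12 F <= c <-> (forall i k, i \in idx2 -> k \in idx2 -> F i k <= c).
Proof.
rewrite /max12 !ge_max; split=> [/andP[/andP[? ?] /andP[? ?]] i k|le_c].
  by rewrite !inE => /pred2P[]-> /pred2P[]->.
by rewrite !le_c.
Qed.

Lemma min12_ge (R : realFieldType) (F : nat -> R) c :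
  c <= min12 F <-> (forall i, i \in idx2 -> c <= F i).
Proof.
rewrite /min12 le_min; split=> [/andP[? ?] i|ge_c]; last by rewrite !ge_c.
by rewrite !inE => /pred2P[]->.
Qed.

Lemma le_affine_pdiv (R : realFieldType) (c l x t : R) :
  0 < l -> (c + l * x <= t) = (x <= (t - c) / l).
Proof. by move=> l_gt0; rewrite ler_pdivlMr // mulrC lerBrDl. Qed.

Lemma affine_max12_le (R : realFieldType) (c l t : R) (F : nat -> nat -> R) :
  0 < l -> c + l * max12 F <= t <->
  (forall i k, i \in idx2 -> k \in idx2 -> c + l * F i k <= t).
Proof.
move=> l_gt0; rewrite le_affine_pdiv //; split=> [/max12_le le_t i k i2 k2|le_t].
  by rewrite le_affine_pdiv // le_t.
by apply/max12_le => i k i2 k2; rewrite -le_affine_pdiv // le_t.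
Qed.

Lemma wmean_le (R : realFieldType) (wj wl hj hl s t : R) : 0 < wj -> 0 < wl ->
  (wl * hj / (wj + wl) + wj * hl / (wj + wl) + wj * wl / (wj + wl) * s <= t)
  = (s <= (t - hj) / wj + (t - hl) / wl).
Proof.
move=> wj_gt0 wl_gt0; have wjl_gt0 : 0 < wj + wl by rewrite addr_gt0.
have -> : wl * hj / (wj + wl) + wj * hl / (wj + wl) + wj * wl / (wj + wl) * s
          = (wl * hj + wj * hl + wj * wl * s) / (wj + wl).
  by field; rewrite gt_eqF.
have -> : (t - hj) / wj + (t - hl) / wl = ((t - hj) * wl + (t - hl) * wj) / (wj * wl).
  by field; rewrite !gt_eqF.
rewrite ler_pdivrMr // ler_pdivlMr ?mulr_gt0 // -subr_ge0 -[X in _ = X]subr_ge0.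
by congr (0 <= _); ring.
Qed.

Lemma norm_add_le (R : realDomainType) (u v r : R) :
  (`|u| + `|v| <= r) = (`|u + v| <= r) && (`|v - u| <= r).
Proof.
rewrite !ler_norml.
have [u_ge0|u_lt0] := lerP 0 u; have [v_ge0|v_lt0] := lerP 0 v;
  rewrite ?(ger0_norm u_ge0) ?(ltr0_norm u_lt0) ?(ger0_norm v_ge0) ?(ltr0_norm v_lt0);
  bool_lra.
Qed.

Section Kleene.
Variables (R : realFieldType) (a b : R).

Lemma le_yvec (u1 u2 : R) i k :
  k \in idx2 -> bstar a b i k + sel2 u1 u2 k <= yvec a b u1 u2 i.
Proof. by rewrite !inE => /pred2P[]->; rewrite /yvec le_max lexx ?orbT. Qed.

Lemma yvec_le (u1 u2 c : R) i :
  (forall k, k \in idx2 -> bstar a b i k + sel2 u1 u2 k <= c) -> yvec a b u1 u2 i <= c.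
Proof. by move=> le_c; rewrite /yvec ge_max (le_c 1%N) ?(le_c 2%N). Qed.

Lemma sel2_le_yvec (u1 u2 : R) i : i \in idx2 -> sel2 u1 u2 i <= yvec a b u1 u2 i.
Proof.
move=> i2; have := le_yvec u1 u2 i i2.
by move: i2; rewrite !inE => /pred2P[]->; rewrite /= add0r.
Qed.

Lemma yvec_id (y1 y2 : R) i : 2 * a <= y1 - y2 <= 2 * b -> i \in idx2 ->
  yvec a b y1 y2 i = sel2 y1 y2 i.
Proof.
move=> /andP[lo hi]; rewrite !inE /yvec => /pred2P[]-> /=; rewrite add0r.
  by rewrite max_l // -lerBrDr.
by rewrite max_r //; lra.
Qed.

Lemma yvec_diff (u1 u2 : R) : a <= b ->
  2 * a <= yvec a b u1 u2 1 - yvec a b u1 u2 2 <= 2 * b.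
Proof.
move=> a_le_b; rewrite /yvec /= !add0r !maxElt.
by do 2 case: ltP => ?; apply/andP; split; lra.
Qed.

End Kleene.

Section RectilinearMinimax.
Context {R : realFieldType} {m : nat} {p1 p2 w d h : nat -> R} {f1 g1 f2 g2 a b : R}.
Hypothesis m_gt0 : (0 < m)%N.
Hypothesis w_gt0 : forall j, (j < m)%N -> 0 < w j.

Local Notation o := (ocoord p1 p2).
Local Notation f := (sel2 f1 f2).
Local Notation g := (sel2 g1 g2).
Local Notation bs := (bstar a b).
Local Notation feas := (feasible m p1 p2 d f1 g1 f2 g2 a b).
Local Notation obj := (objective m p1 p2 w h).

(* The bounds that point j imposes at level t on the rotated coordinate y_k,
   where y = (x1 + x2, x2 - x1). *)
Definition ylow k t j :=
  Num.max (Num.max ((h j - t) / w j + o k j) (- d j + o k j)) (f k).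
Definition yupp i t j :=
  Num.min (Num.min ((t - h j) / w j + o i j) (d j + o i j)) (g i).

Lemma point_constraints_box t j x1 x2 : (j < m)%N ->
  [&& rdist p1 p2 j x1 x2 <= d j, w j * rdist p1 p2 j x1 x2 + h j <= t,
      f1 - x2 <= x1 <= g1 - x2 & f2 + x1 <= x2 <= g2 + x1]
  = [&& ylow 1 t j <= x1 + x2 <= yupp 1 t j & ylow 2 t j <= x2 - x1 <= yupp 2 t j].
Proof.
move=> jm; rewrite [w j * _ + h j]addrC le_affine_pdiv ?w_gt0 // /rdist !norm_add_le.
rewrite /ylow /yupp /ocoord /sel2 /=.
have -> : (h j - t) / w j = - ((t - h j) / w j) by rewrite -mulNr opprB.
set e := (t - h j) / w j.
rewrite !ler_norml !ge_max !le_min; bool_lra.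
Qed.

Definition in_box t y1 y2 := forall j, (j < m)%N ->
  [&& ylow 1 t j <= y1 <= yupp 1 t j & ylow 2 t j <= y2 <= yupp 2 t j].

Lemma sublevel_box t x1 x2 :
  feas x1 x2 /\ obj x1 x2 <= t <-> in_box t (x1 + x2) (x2 - x1) /\ a <= x1 <= b.
Proof.
split=> [[[dist fg1 fg2 ab] /(fmax_le m_gt0) objt] | [box ab]].
  by split=> // j jm; rewrite -point_constraints_box // dist // objt // fg1 fg2.
have := box 0%N m_gt0; rewrite -point_constraints_box // => /and4P[_ _ fg1 fg2].
split; first split=> // j jm.
  by have := box j jm; rewrite -point_constraints_box // => /and4P[].
apply/(fmax_le m_gt0) => j jm.
by have := box j jm; rewrite -point_constraints_box // => /and4P[].
Qed.

Definition params t u1 u2 := forall k, k \in idx2 ->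
  fmax m (ylow k t) <= sel2 u1 u2 k /\
  sel2 u1 u2 k <= min12 (fun i => fmin m (fun j => yupp i t j - bs i k)).

Lemma paramsP t u1 u2 : params t u1 u2 <->
  (forall k j, k \in idx2 -> (j < m)%N -> ylow k t j <= sel2 u1 u2 k) /\
  (forall i k j, i \in idx2 -> k \in idx2 -> (j < m)%N ->
     sel2 u1 u2 k + bs i k <= yupp i t j).
Proof.
split=> [prm | [lo up] k k2].
  split=> [k j k2 jm | i k j i2 k2 jm]; have [lo up] := prm k k2.
    exact: (fmax_le m_gt0).1 lo j jm.
  by rewrite -lerBrDr; apply: (fmin_ge m_gt0).1 ((min12_ge _ _).1 up i i2) j jm.
split; first by apply/(fmax_le m_gt0) => j jm; apply: lo.
by apply/min12_ge => i i2; apply/(fmin_ge m_gt0) => j jm; rewrite lerBrDr up.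
Qed.

Definition solvable t := forall i k j l, i \in idx2 -> k \in idx2 ->
  (j < m)%N -> (l < m)%N -> ylow k t l + bs i k <= yupp i t j.

Lemma solvableP t : solvable t <-> exists u1 u2, params t u1 u2.
Proof.
split=> [solv | [u1 [u2 /paramsP[lo up]]] i k j l i2 k2 jm lm].
  exists (fmax m (ylow 1 t)), (fmax m (ylow 2 t)); apply (paramsP _ _ _).2.
  split=> [k j | i k j i2]; rewrite !inE => /pred2P[]-> jm /=; rewrite ?fmax_ge //;
  by rewrite -lerBrDr; apply/(fmax_le m_gt0) => l lm; rewrite lerBrDr solv.
by apply: le_trans (up i k j i2 k2 jm); rewrite lerD2r lo.
Qed.

Hypothesis a_le_b : a <= b.

Lemma sublevel_params t x1 x2 : feas x1 x2 /\ obj x1 x2 <= t <->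
  exists u1 u2, params t u1 u2 /\
    x1 = (yvec a b u1 u2 1 - yvec a b u1 u2 2) / 2 /\
    x2 = (yvec a b u1 u2 1 + yvec a b u1 u2 2) / 2.
Proof.
split=> [/sublevel_box[box ab] | [u1 [u2 [/paramsP[lo up] [-> ->]]]]].
  have y_id i : i \in idx2 ->
      yvec a b (x1 + x2) (x2 - x1) i = sel2 (x1 + x2) (x2 - x1) i.
    by apply: yvec_id; apply/andP; split; lra.
  exists (x1 + x2), (x2 - x1); rewrite !y_id //.
  split; last by split; rewrite /sel2 /=; field.
  apply (paramsP _ _ _).2; split=> [k j | i k j i2 k2 jm].
    rewrite !inE => /pred2P[]-> jm; rewrite /sel2 /=;
    by case/andP: (box j jm) => /andP[? _] /andP[? _].
  rewrite addrC; apply: le_trans (le_yvec a b _ _ i k2) _; rewrite y_id //.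
  move: i2; rewrite !inE /sel2 => /pred2P[]-> /=;
  by case/andP: (box j jm) => /andP[_ ?] /andP[_ ?].
have /andP[lo_diff up_diff] := yvec_diff u1 u2 a_le_b.
apply (sublevel_box _ _ _).2; split; last by apply/andP; split; lra.
set y1 := yvec a b u1 u2 1; set y2 := yvec a b u1 u2 2.
have -> : (y1 - y2) / 2 + (y1 + y2) / 2 = y1 by field.
have -> : (y1 + y2) / 2 - (y1 - y2) / 2 = y2 by field.
move=> j jm; apply/andP; split; apply/andP; split.
- exact: le_trans (lo 1%N j _ jm) (sel2_le_yvec _ _ _ _ _).
- by apply: yvec_le => k k2; rewrite addrC up.
- exact: le_trans (lo 2%N j _ jm) (sel2_le_yvec _ _ _ _ _).
- by apply: yvec_le => k k2; rewrite addrC up.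
Qed.

Hypothesis hcond : forall i k, i \in idx2 -> k \in idx2 ->
  bs i k + fmax m (fun l => Num.max (o k l - d l) (f k))
  <= fmin m (fun j => Num.min (o i j + d j) (g i)).

(* The levels beyond which [ylow k t l + b*_ik <= yupp i t j] holds for the
   three pairings involving a t-dependent bound; they are the terms of theta. *)
Definition crit_obj_obj j l i k :=
  w l * h j / (w j + w l) + w j * h l / (w j + w l)
  + w j * w l / (w j + w l) * (bs i k - o i j + o k l).
Definition crit_obj_box j l i k :=
  h j + w j * (bs i k - o i j + Num.max (o k l - d l) (f k)).
Definition crit_box_obj j l i k :=
  h l + w l * (bs i k - Num.min (d j + o i j) (g i) + o k l).

Lemma solvable_pairE t i k j l : i \in idx2 -> k \in idx2 -> (j < m)%N -> (l < m)%N ->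
  (ylow k t l + bs i k <= yupp i t j)
  = [&& crit_obj_obj j l i k <= t, crit_obj_box j l i k <= t & crit_box_obj j l i k <= t].
Proof.
move=> i2 k2 jm lm; have wj := w_gt0 jm; have wl := w_gt0 lm.
rewrite /crit_obj_obj wmean_le // /crit_obj_box /crit_box_obj !le_affine_pdiv //.
set M := Num.max (o k l - d l) (f k); set N := Num.min (d j + o i j) (g i).
have MN : bs i k + M <= N.
  apply: le_trans (le_trans _ (hcond i2 k2)) _.
    by rewrite lerD2l (fmax_ge (fun l => Num.max (o k l - d l) (f k))).
  by rewrite /N addrC (fmin_le (fun j => Num.min (o i j + d j) (g i))).
have -> : ylow k t l = Num.max ((h l - t) / w l + o k l) M.
  by rewrite /ylow -maxA [- d l + _]addrC.
have -> : yupp i t j = Num.min ((t - h j) / w j + o i j) N by rewrite /yupp -minA.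
have -> : (h l - t) / w l = - ((t - h l) / w l) by rewrite -mulNr opprB.
set el := (t - h l) / w l; set ej := (t - h j) / w j.
clearbody M N; rewrite le_min -!lerBrDr !ge_max; bool_lra.
Qed.

Local Notation th := (theta m p1 p2 w d h f1 g1 f2 g2 a b).

Lemma theta_le_solvable t : th <= t <-> solvable t.
Proof.
have wjl_gt0 j l : (j < m)%N -> (l < m)%N -> 0 < w j * w l / (w j + w l).
  by move=> jm lm; rewrite divr_gt0 ?mulr_gt0 ?addr_gt0 ?w_gt0.
split=> [/(fmax_le m_gt0) le_t i k j l i2 k2 jm lm | solv].
  have := (fmax_le m_gt0).1 (le_t j jm) l lm.
  rewrite !ge_max => /andP[/andP[T1 T2] T3].
  rewrite solvable_pairE //; apply/and3P; split.
  - exact: (affine_max12_le _ _ _ (wjl_gt0 j l jm lm)).1 T1 i k i2 k2.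
  - exact: (affine_max12_le _ _ _ (w_gt0 jm)).1 T2 i k i2 k2.
  - exact: (affine_max12_le _ _ _ (w_gt0 lm)).1 T3 i k i2 k2.
apply/(fmax_le m_gt0) => j jm; apply/(fmax_le m_gt0) => l lm.
rewrite !ge_max -andbA; apply/and3P; split; apply/affine_max12_le;
  rewrite ?w_gt0 ?wjl_gt0 // => i k i2 k2;
  by have := solv i k j l i2 k2 jm lm; rewrite solvable_pairE // => /and3P[].
Qed.

Lemma theta_le_objective x1 x2 : feas x1 x2 -> th <= obj x1 x2.
Proof.
move=> fx; apply/theta_le_solvable/solvableP.
have [u1 [u2 [pu _]]] := (sublevel_params _ _ _).1 (conj fx (lexx (obj x1 x2))).
by exists u1, u2.
Qed.

Lemma argmin_sublevel x1 x2 :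
  feas x1 x2 /\ obj x1 x2 = th <-> feas x1 x2 /\ obj x1 x2 <= th.
Proof.
split=> [[fx ->] // | [fx le_th]]; split=> //.
by apply/eqP; rewrite eq_le le_th theta_le_objective.
Qed.

Lemma theta_attained : exists x1 x2, feas x1 x2 /\ obj x1 x2 = th.
Proof.
have /solvableP[u1 [u2 pu]] : solvable th by apply/theta_le_solvable.
exists ((yvec a b u1 u2 1 - yvec a b u1 u2 2) / 2).
exists ((yvec a b u1 u2 1 + yvec a b u1 u2 2) / 2).
by apply/argmin_sublevel/sublevel_params; exists u1, u2.
Qed.

End RectilinearMinimax.

Theorem corollary3 (R : realFieldType) (m : nat) (hm : (1 <= m)%N)
  (p1 p2 w d h : nat -> R) (f1 g1 f2 g2 a b : R)
  (hw : forall j, (j < m)%N -> 0 < w j)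
  (hd : forall j, (j < m)%N -> 0 < d j)
  (hfg1 : f1 <= g1) (hfg2 : f2 <= g2) (hab : a <= b)
  (hcond : forall i k, (i \in [:: 1%N; 2%N]) -> (k \in [:: 1%N; 2%N]) ->
     bstar a b i k
       + fmax m (fun l => Num.max (ocoord p1 p2 k l - d l) (sel2 f1 f2 k))
     <= fmin m (fun j => Num.min (ocoord p1 p2 i j + d j) (sel2 g1 g2 i))) :
  let th := theta m p1 p2 w d h f1 g1 f2 g2 a b in
  (* the minimum exists and equals th *)
  (exists x1 x2 : R, feasible m p1 p2 d f1 g1 f2 g2 a b x1 x2 /\
                     objective m p1 p2 w h x1 x2 = th) /\
  (forall x1 x2 : R, feasible m p1 p2 d f1 g1 f2 g2 a b x1 x2 ->
                     th <= objective m p1 p2 w h x1 x2) /\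
  (* the solution set is exactly the parametrized family *)
  (forall x1 x2 : R,
     (feasible m p1 p2 d f1 g1 f2 g2 a b x1 x2 /\
      objective m p1 p2 w h x1 x2 = th) <->
     (exists u1 u2 : R,
        (forall k, (k \in [:: 1%N; 2%N]) ->
           fmax m (fun j => Num.max (Num.max ((h j - th) / w j + ocoord p1 p2 k j)
                                             (- d j + ocoord p1 p2 k j))
                                    (sel2 f1 f2 k))
           <= sel2 u1 u2 k /\
           sel2 u1 u2 k
           <= min12 (fun i => fmin m (fun j =>
                 Num.min (Num.min ((th - h j) / w j + ocoord p1 p2 i j)
                                  (d j + ocoord p1 p2 i j))
                         (sel2 g1 g2 i)
                 - bstar a b i k))) /\
        x1 = (yvec a b u1 u2 1%N - yvec a b u1 u2 2%N) / 2 /\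
        x2 = (yvec a b u1 u2 1%N + yvec a b u1 u2 2%N) / 2)).
Proof.
move=> th; split; first exact: theta_attained.
split; first exact: theta_le_objective.
move=> x1 x2.
exact: iff_trans (argmin_sublevel hm hw hab hcond x1 x2)
                 (sublevel_params hm hw hab th x1 x2).
Qed.
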